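(* The map $\omega'\mapsto\operatorname{Im}\mathcal A_{\omega'}$ is a bijection from $\operatorname{Sc}(V_{\widehat{\mathfrak h}}(1,0),\omega)$ onto $\operatorname{Reg}(\mathfrak h)$, the set of regular subspaces of $\mathfrak h$.
   Context: $\mathfrak h$ is a $d$-dimensional complex vector space with nondegenerate symmetric bilinear form $\langle\cdot,\cdot\rangle$ and fixed orthonormal basis $h_1,\dots,h_d$; $V_{\widehat{\mathfrak h}}(1,0)$ is the level 1 Heisenberg vertex algebra with $[h(m),h'(n)]=m\langle h,h'\rangle\delta_{m+n,0}$ and standard conformal vector $\omega=\frac12\sum_ih_i(-1)^2\mathbf 1$. For $\omega'=\sum_{i\le j}a_{ij}h_i(-1)h_j(-1)\mathbf 1+\sum_ib_ih_i(-2)\mathbf 1$, $\mathcal A_{\omega'}\in\operatorname{End}(\mathfrak h)$ has matrix (in basis $h_i$) the symmetric matrix with diagonal $2a_{ii}$ and off-diagonal entries $a_{ij}$. A subspace $\mathfrak h'\subseteq\mathfrak h$ is regular if $\langle\cdot,\cdot\rangle|_{\mathfrak h'}$ is nondegenerate. $\operatorname{Sc}(V,\omega)$ is the set of semi-conformal vectors (conformal vectors $\omega'$ of vertex operator subalgebras $(U,\omega')$ with $\omega_n|_U=\omega'_n|_U$ for $n\ge0$). *)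

From HB Require Import structures.
From mathcomp Require Import all_boot all_order all_algebra.
From mathcomp Require Import complex Rstruct.
Set Implicit Arguments. Unset Strict Implicit. Unset Printing Implicit Defensive.
Import Order.TTheory GRing.Theory Num.Theory.
Local Open Scope ring_scope.

Definition CC : numClosedFieldType := complex Rdefinitions.R.

Section VOA.
Variable K : fieldType.
Variable V : lmodType K.

(* Y u n v  is the mode  u_n v  (Y(u,z) = \sum_n u_n z^{-n-1}). *)
Definition vop := V -> int -> V -> V.

Definition binz (p : int) (i : nat) : K :=
  (\prod_(j < i) (p - (j : nat)%:Z)%:~R) / (i`!)%:R.

Definition subspaceP (U : V -> Prop) : Prop :=
  U 0 /\ (forall (a : K) u v, U u -> U v -> U (a *: u + v)).

Definition bilinear_vop (Y : vop) : Prop :=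
  (forall n v (a : K) u u', Y (a *: u + u') n v = a *: Y u n v + Y u' n v) /\
  (forall n u (a : K) v v', Y u n (a *: v + v') = a *: Y u n v + Y u n v').

(* (U, Y|_U, one) is a vertex algebra (U a subspace of V closed under all
   modes): truncation, vacuum, creation, and the Jacobi identity in its
   component (Borcherds) form, the sums being finite by truncation. *)
Definition is_va_on (U : V -> Prop) (Y : vop) (one : V) : Prop :=
  subspaceP U /\ U one /\
  (forall u v n, U u -> U v -> U (Y u n v)) /\
  (forall u v, U u -> U v -> exists N : int, forall n, N <= n -> Y u n v = 0) /\
  (forall v, U v -> Y one (-1) v = v /\ (forall n, n != -1 -> Y one n v = 0)) /\
  (forall u, U u -> Y u (-1) one = u /\ (forall n : int, 0 <= n -> Y u n one = 0)) /\
  (forall u v w, U u -> U v -> U w -> forall p q r : int,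
     exists N : nat, forall M : nat, (N <= M)%N ->
       \sum_(i < M) binz p i *: Y (Y u (r + (i : nat)%:Z) v) (p + q - (i : nat)%:Z) w =
       \sum_(i < M) ((-1) ^+ i * binz r i) *:
          (Y u (p + r - (i : nat)%:Z) (Y v (q + (i : nat)%:Z) w)
           - (-1) ^ r *: Y v (q + r - (i : nat)%:Z) (Y u (p + (i : nat)%:Z) w))).

(* (U, Y|_U, one, w) is a vertex operator algebra; L(n) = w_{n+1}. *)
Definition is_voa_on (U : V -> Prop) (Y : vop) (one w : V) : Prop :=
  is_va_on U Y one /\ U w /\
  (exists c : K, forall (m n : int) v, U v ->
     Y w (m + 1) (Y w (n + 1) v) - Y w (n + 1) (Y w (m + 1) v) =
     (m - n)%:~R *: Y w (m + n + 1) v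
     + (if m + n == 0 then ((m ^+ 3 - m)%:~R / 12%:R) * c else 0) *: v) /\
  Y w 1 w = 2%:R *: w /\
  (* L(-1)-derivative property: Y(L(-1)u, z) = d/dz Y(u, z) *)
  (forall u, U u -> forall (n : int) x, U x ->
     Y (Y w 0 u) n x = (- n)%:~R *: Y u (n - 1) x) /\
  (* U is the direct sum of the integer L(0)-eigenspaces U_(n) ... *)
  (forall v, U v -> exists (N : nat) (f : 'I_N -> V) (wt : 'I_N -> int),
      v = \sum_(i < N) f i /\ forall i, U (f i) /\ Y w 1 (f i) = (wt i)%:~R *: f i) /\
  (* ... each finite-dimensional ... *)
  (forall n : int, exists s : seq V, forall v, U v -> Y w 1 v = n%:~R *: v ->
      exists c : 'I_(size s) -> K, v = \sum_(i < size s) c i *: nth 0 s i) /\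
  (* ... and vanishing for n sufficiently negative. *)
  (exists N : int, forall (n : int) v, n < N -> U v -> Y w 1 v = n%:~R *: v -> v = 0).

Definition semi_conformal (Y : vop) (one w w' : V) : Prop :=
  exists U : V -> Prop, is_voa_on U Y one w' /\
    forall n : int, 0 <= n -> forall u, U u -> Y w n u = Y w' n u.

Variable d : nat.

Definition hmono (Y : vop) (one : V) (h : 'I_d -> V) (s : seq ('I_d * nat)) : V :=
  foldr (fun p x => Y (h p.1) (- (p.2.+1)%:Z) x) one s.

(* (V, Y, one, w) is the level-1 Heisenberg VOA V_{\hat h}(1,0) for
   h = K^d with the standard symmetric form, h_i = h i the orthonormal basis
   (h_i(n) = Y (h i) n), and w the standard conformal vector. *)
Definition heisenberg_voa (Y : vop) (one w : V) (h : 'I_d -> V) : Prop :=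
  bilinear_vop Y /\ is_voa_on (fun _ => True) Y one w /\ one != 0 /\
  (forall (i j : 'I_d) (m n : int) v,
     Y (h i) m (Y (h j) n v) - Y (h j) n (Y (h i) m v) =
     (if (i == j) && (m + n == 0) then m%:~R else 0) *: v) /\
  (forall v, exists (N : nat) (ms : 'I_N -> seq ('I_d * nat)) (c : 'I_N -> K),
     v = \sum_(k < N) c k *: hmono Y one h (ms k)) /\
  w = (2%:R)^-1 *: \sum_(i < d) Y (h i) (-1) (Y (h i) (-1) one).

Definition weight2_vec (Y : vop) (one : V) (h : 'I_d -> V)
    (a : 'M[K]_d) (b : 'rV[K]_d) : V :=
  \sum_(i < d) \sum_(j < d | (i <= j)%N) a i j *: Y (h i) (-1) (Y (h j) (-1) one)
  + \sum_(i < d) b 0 i *: Y (h i) (-2) one.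

(* matrix of A_{w'} in the basis h_i *)
Definition Amat (a : 'M[K]_d) : 'M[K]_d :=
  \matrix_(i, j) (if i == j then 2%:R * a i i else if (i < j)%N then a i j else a j i).

(* Im A_{w'} = W (subspaces of K^d as row spaces; the endomorphism with
   matrix A acts on coordinate row vectors by x |-> x *m A^T). *)
Definition imA_rel (Y : vop) (one : V) (h : 'I_d -> V) (w' : V) (W : 'M[K]_d) : Prop :=
  exists a b, w' = weight2_vec Y one h a b /\ (W == (Amat a)^T)%MS.

End VOA.

Definition regular_sub (K : fieldType) (d : nat) (W : 'M[K]_d) : Prop :=
  forall x : 'rV[K]_d, (x <= W)%MS ->
    (forall y : 'rV[K]_d, (y <= W)%MS -> x *m y^T = 0) -> x = 0.

From HB Require Import structures.
From mathcomp Require Import all_boot all_order all_algebra.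
From mathcomp Require Import complex Rstruct.
From mathcomp Require Import zify ring.
Set Implicit Arguments. Unset Strict Implicit. Unset Printing Implicit Defensive.
Import Order.TTheory GRing.Theory Num.Theory.
Local Open Scope ring_scope.

(* Write S for the symmetric matrix A_w'.  The weight-2 space of V_h(1,0) is
   spanned by the quadratic vectors h_i(-1)h_j(-1)1, which only see the
   symmetric part of their coefficient matrix, and by the vectors h_i(-2)1; the
   double mode h_l(1)h_k(1) reads off the entry S_kl.  A semi-conformal w' has
   weight 2, and w_2 w' = w'_2 w' = 0 kills its h(-2) part; then w'_1 w' = 2 w'
   says S^2 = S, so S is the orthogonal projection onto Im A_w', which is
   therefore regular, and w' is determined by S.  Conversely, for the orthogonal
   projection P onto a regular subspace, w' = (1/2) sum_ij P_ij h_i(-1)h_j(-1)1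
   is the conformal vector of the subalgebra generated by h(P): the difference
   w - w' is built from h(1 - P), which commutes with h(P), so w and w' have
   the same nonnegative modes there. *)

Section SymmetricMatrices.
Variables (K : fieldType) (n : nat).

Definition symmx (C : 'M[K]_n) : 'M[K]_n := C + C^T.

Definition upper_part (a : 'M[K]_n) : 'M[K]_n :=
  \matrix_(i, j) if (i <= j)%N then a i j else 0.

Lemma trmx_symmx C : (symmx C)^T = symmx C.
Proof. by rewrite /symmx linearD /= trmxK addrC. Qed.

Lemma Amat_symmx a : Amat a = symmx (upper_part a).
Proof.
apply/matrixP => i j; rewrite !mxE.
case: (ltngtP i j) => [lt_ij|lt_ji|/val_inj->]; last by rewrite eqxx mulr_natl mulr2n.
- by rewrite -val_eqE (ltn_eqF lt_ij) addr0.
- by rewrite -val_eqE (gtn_eqF lt_ji) add0r.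
Qed.

Lemma symmx_upper_part C : exists a, symmx (upper_part a) = symmx C.
Proof.
exists (\matrix_(i, j) if (i < j)%N then C i j + C j i else if i == j then C i i else 0).
apply/matrixP => i j; rewrite !mxE.
by case: (ltngtP i j) => [_|_|/val_inj->]; rewrite ?eqxx ?addr0 // add0r addrC.
Qed.

Lemma symmx_halfZ (S : 'M[K]_n) : 2%:R != 0 :> K -> S^T = S -> symmx (2%:R^-1 *: S) = S.
Proof.
move=> two_neq0 symS; have half : 2%:R^-1 + 2%:R^-1 = 1 :> K by field.
by rewrite /symmx linearZ /= symS -scalerDl half scale1r.
Qed.

Lemma symmx_mul_symmx B :
  symmx (B *m symmx B + symmx B *m B) = 2%:R *: (symmx B *m symmx B).
Proof.
have [S defS] : {S | symmx B = S} by exists (symmx B).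
have symS : S^T = S by rewrite -defS trmx_symmx.
rewrite defS [LHS]/symmx [(_ + _)^T]linearD /= !trmx_mul symS scaler_nat mulr2n.
have -> : S *m S + S *m S = (B + B^T) *m S + S *m (B + B^T) by rewrite -defS.
by rewrite mulmxDl mulmxDr [RHS]addrACA [_ + S *m B^T]addrC.
Qed.

Lemma idem_mulmx_sub (P : 'M[K]_n) m (B : 'M[K]_(m, n)) :
  P *m P = P -> (B <= P)%MS -> B *m P = B.
Proof. by move=> idemP /submxP[D ->]; rewrite -mulmxA idemP. Qed.

Lemma sym_idem_eq (S1 S2 : 'M[K]_n) : S1^T = S1 -> S2^T = S2 ->
  S1 *m S1 = S1 -> S2 *m S2 = S2 -> (S1 == S2)%MS -> S1 = S2.
Proof.
move=> sym1 sym2 idem1 idem2 /andP[/submxP[D1 E1] /submxP[D2 E2]].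
have S12 : S1 *m S2 = S1 by rewrite {1}E1 -mulmxA idem2 -E1.
have S21 : S2 *m S1 = S2 by rewrite {1}E2 -mulmxA idem1 -E2.
by rewrite -sym1 -{1}S12 trmx_mul sym1 sym2 S21.
Qed.

Lemma sym_idem_regular (S : 'M[K]_n) : S^T = S -> S *m S = S -> regular_sub S.
Proof.
move=> symS idemS x /submxP[z ->] orth.
have zSS : z *m S *m S^T = 0.
  apply/rowP => k; have /matrixP/(_ 0 0) := orth _ (row_sub k S).
  by rewrite !mxE => E; apply: etrans _ E; apply: eq_bigr => j _; rewrite !mxE.
by rewrite -zSS symS -mulmxA idemS.
Qed.

Lemma regular_gram_unit (W : 'M[K]_n) : regular_sub W ->
  row_base W *m (row_base W)^T \in unitmx.
Proof.
move=> regW; rewrite -row_free_unit; apply: inj_row_free => v vG.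
have vB0 : v *m row_base W = 0.
  apply: regW; first by rewrite -(eq_row_base W) submxMl.
  move=> y; rewrite -(eq_row_base W) => /submxP[z ->].
  by rewrite trmx_mul mulmxA -(mulmxA v) vG mul0mx.
by apply/eqP; rewrite -(mulmx_free_eq0 _ (row_base_free W)) vB0.
Qed.

(* The orthogonal projection B^T (B B^T)^-1 B onto the row space of a basis B. *)
Lemma regular_proj (W : 'M[K]_n) : regular_sub W ->
  exists P, [/\ P^T = P, P *m P = P & (P == W)%MS].
Proof.
move=> regW; move: (row_base W) (eq_row_base W) (regular_gram_unit regW).
move=> B eqBW G_unit; have symG : (B *m B^T)^T = B *m B^T by rewrite trmx_mul trmxK.
exists (B^T *m invmx (B *m B^T) *m B); split.
- by rewrite !trmx_mul trmxK trmx_inv symG mulmxA.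
- by rewrite !mulmxA -(mulmxA _ B B^T) -(mulmxA B^T) mulVmx // mulmx1.
- apply/eqmxP/(eqmx_trans _ eqBW)/eqmxP/andP; split; first exact: submxMl.
  by apply/submxP; exists B; rewrite !mulmxA mulmxV // mul1mx.
Qed.

End SymmetricMatrices.

Lemma sum_ord_trunc (T : nmodType) (F : nat -> T) (k m : nat) : (k <= m)%N ->
  (forall i, (k <= i)%N -> F i = 0) -> \sum_(i < m) F i = \sum_(i < k) F i.
Proof.
move=> le_km Fk; rewrite -!(big_mkord xpredT) (big_cat_nat (leq0n k) le_km) /=.
by rewrite [X in _ + X]big1_seq ?addr0 // => i /andP[_]; rewrite mem_index_iota => /andP[/Fk].
Qed.
Arguments sum_ord_trunc {T} F {k m}.

Section BinomialInt.
Variable K : fieldType.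

Lemma binz0 p : binz K p 0 = 1.
Proof. by rewrite /binz big_ord0 divr1. Qed.

Lemma binz1 p : binz K p 1 = p%:~R.
Proof. by rewrite /binz big_ord1 /= subr0 divr1. Qed.

Lemma binz0n i : (0 < i)%N -> binz K 0 i = 0.
Proof. by case: i => // i _; rewrite /binz big_ord_recl /= subr0 !mul0r. Qed.

End BinomialInt.

Section BilinearVop.
Variables (K : fieldType) (V : lmodType K) (Y : vop V).
Hypothesis bilY : bilinear_vop Y.

Definition vop_rlin (u : V) (n : int) : {linear V -> V} :=
  HB.pack (Y u n) (GRing.isLinear.Build K V V *:%R (Y u n) (proj2 bilY n u)).

Definition vop_llin (n : int) (v : V) : {linear V -> V} :=
  HB.pack (fun u => Y u n v)
    (GRing.isLinear.Build K V V *:%R (fun u => Y u n v) (proj1 bilY n v)).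

Lemma vop0r u n : Y u n 0 = 0. Proof. exact: (linear0 (vop_rlin u n)). Qed.
Lemma vopDr u n v v' : Y u n (v + v') = Y u n v + Y u n v'.
Proof. exact: (linearD (vop_rlin u n)). Qed.
Lemma vopZr u n a v : Y u n (a *: v) = a *: Y u n v.
Proof. exact: (linearZZ (vop_rlin u n)). Qed.
Lemma vop_sumr u n I (r : seq I) (P : pred I) (F : I -> V) :
  Y u n (\sum_(i <- r | P i) F i) = \sum_(i <- r | P i) Y u n (F i).
Proof. exact: (linear_sum (vop_rlin u n)). Qed.

Lemma vop0l n v : Y 0 n v = 0. Proof. exact: (linear0 (vop_llin n v)). Qed.
Lemma vopDl u u' n v : Y (u + u') n v = Y u n v + Y u' n v.
Proof. exact: (linearD (vop_llin n v)). Qed.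
Lemma vopBl u u' n v : Y (u - u') n v = Y u n v - Y u' n v.
Proof. exact: (linearB (vop_llin n v)). Qed.
Lemma vopZl a u n v : Y (a *: u) n v = a *: Y u n v.
Proof. exact: (linearZZ (vop_llin n v)). Qed.
Lemma vop_suml n v I (r : seq I) (P : pred I) (F : I -> V) :
  Y (\sum_(i <- r | P i) F i) n v = \sum_(i <- r | P i) Y (F i) n v.
Proof. exact: (linear_sum (vop_llin n v)). Qed.

End BilinearVop.

Section VertexAlgebra.
Variables (K : fieldType) (V : lmodType K) (Y : vop V) (one : V).
Hypotheses (bilY : bilinear_vop Y) (vaY : is_va_on (fun _ => True) Y one).

Lemma vacuum_modeN1 v : Y one (-1) v = v.
Proof. by have [_ [_ [_ [_ [vac _]]]]] := vaY; case: (vac v I). Qed.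

Lemma vacuum_mode n v : n != -1 -> Y one n v = 0.
Proof. by have [_ [_ [_ [_ [vac _]]]]] := vaY; case: (vac v I) => _; apply. Qed.

Lemma mode_vacuumN1 u : Y u (-1) one = u.
Proof. by have [_ [_ [_ [_ [_ [cre _]]]]]] := vaY; case: (cre u I). Qed.

Lemma mode_vacuum u n : 0 <= n -> Y u n one = 0.
Proof. by have [_ [_ [_ [_ [_ [cre _]]]]]] := vaY; case: (cre u I) => _; apply. Qed.

Lemma borcherds u v x (p q r : int) : exists N : nat, forall M : nat, (N <= M)%N ->
  \sum_(i < M) binz K p i *: Y (Y u (r + i%:Z) v) (p + q - i%:Z) x =
  \sum_(i < M) ((-1) ^+ i * binz K r i) *:
     (Y u (p + r - i%:Z) (Y v (q + i%:Z) x)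
      - (-1) ^ r *: Y v (q + r - i%:Z) (Y u (p + i%:Z) x)).
Proof. by have [_ [_ [_ [_ [_ [_ jac]]]]]] := vaY; apply: jac. Qed.

Lemma commutator_formula u v x p q (k : nat) :
  (forall i : nat, (k <= i)%N -> Y u i%:Z v = 0) ->
  Y u p (Y v q x) - Y v q (Y u p x) =
  \sum_(i < k) binz K p i *: Y (Y u i%:Z v) (p + q - i%:Z) x.
Proof.
move=> uv_k; have [N borN] := borcherds u v x p q 0.
have [le_NM le_kM] : (N <= (maxn N k).+1)%N /\ (k <= (maxn N k).+1)%N.
  by rewrite !leqW ?leq_maxl ?leq_maxr.
have := borN _ le_NM.
rewrite (sum_ord_trunc (fun i => binz K p i *: Y (Y u (0 + i%:Z) v) (p + q - i%:Z) x) le_kM);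
  last by move=> i /uv_k; rewrite add0r => ->; rewrite vop0l // scaler0.
rewrite (sum_ord_trunc (fun i => ((-1) ^+ i * binz K 0 i) *:
  (Y u (p + 0 - i%:Z) (Y v (q + i%:Z) x) - (-1) ^ 0 *: Y v (q + 0 - i%:Z) (Y u (p + i%:Z) x)))
  (ltn0Sn _)); last by move=> i /binz0n ->; rewrite mulr0 scale0r.
rewrite big_ord1 /= binz0 mulr1 scale1r expr0z scale1r !addr0 => <-.
by apply: eq_bigr => i _; rewrite add0r.
Qed.

Lemma associator_formula u v x (q r : int) : exists N : nat,
  Y (Y u r v) q x = \sum_(i < N) ((-1) ^+ i * binz K r i) *:
     (Y u (r - i%:Z) (Y v (q + i%:Z) x) - (-1) ^ r *: Y v (q + r - i%:Z) (Y u i%:Z x)).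
Proof.
have [N borN] := borcherds u v x 0 q r; exists N.+1.
have := borN _ (leqnSn N).
rewrite (sum_ord_trunc (fun i => binz K 0 i *: Y (Y u (r + i%:Z) v) (0 + q - i%:Z) x)
  (ltn0Sn _)); last by move=> i /binz0n ->; rewrite scale0r.
rewrite big_ord1 /= binz0 scale1r addr0 add0r subr0 => ->.
by apply: eq_bigr => i _; rewrite !add0r.
Qed.

Lemma is_va_on_subspace (U : V -> Prop) : subspaceP U -> U one ->
  (forall u v n, U u -> U v -> U (Y u n v)) -> is_va_on U Y one.
Proof.
move=> subU Uone closU; have [_ [_ [_ [trunc [vac [cre jac]]]]]] := vaY.
split=> //; split=> //; split=> //; split; first by move=> u v _ _; apply: trunc.
split; first by move=> v _; apply: vac.
by split=> [u _|u v x _ _ _]; [apply: cre | apply: jac].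
Qed.

End VertexAlgebra.

Lemma conformal_mode2_self (K : fieldType) (V : lmodType K) (Y : vop V) (U : V -> Prop)
    (one w : V) : bilinear_vop Y -> is_voa_on U Y one w -> Y w 2 w = 0.
Proof.
move=> bilY [[_ [Uone [_ [_ [_ [creation _]]]]]] [Uw [[c vir] _]]].
have [wm1 w_ge0] := creation w Uw; have := vir 1 (-2) one Uone.
rewrite (_ : 1 + 1 = 2) // (_ : -2 + 1 = -1) // (_ : 1 + -2 + 1 = 0) // wm1 !w_ge0 //.
by rewrite vop0r // subr0 scaler0 add0r scale0r.
Qed.

Section EigenSum.
Variables (K : fieldType) (V : lmodType K) (f : {linear V -> V}).

(* Applying f - e i0 kills the first summand and keeps the other summands eigenvectors. *)
Lemma eigen_sum_eq0 (I : eqType) (r : seq I) (e : I -> K) (lam : K) (F : I -> V) :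
  (forall i, i \in r -> f (F i) = e i *: F i) -> (forall i, i \in r -> e i != lam) ->
  f (\sum_(i <- r) F i) = lam *: \sum_(i <- r) F i -> \sum_(i <- r) F i = 0.
Proof.
elim: r F => [|i0 r IHr] F eigF e_neq; first by rewrite big_nil.
rewrite big_cons linearD eigF ?mem_head //; set X := \sum_(i <- r) F i => eigX.
have fX : f X = lam *: (F i0 + X) - e i0 *: F i0 by rewrite -eigX addrC addKr.
have shiftX : \sum_(i <- r) (e i - e i0) *: F i = (lam - e i0) *: (F i0 + X).
  rewrite (eq_big_seq (fun i => f (F i) - e i0 *: F i)); last first.
    by move=> i ri; rewrite scalerBl eigF // inE ri orbT.
  rewrite sumrB -linear_sum -scaler_sumr fX scalerBl.
  by rewrite [e i0 *: (F i0 + X)]scalerDr opprD addrA.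
have : \sum_(i <- r) (e i - e i0) *: F i = 0.
  apply: IHr => [i ri|i ri|]; last first.
  - rewrite shiftX linearZ /= linearD eigF ?mem_head // fX [e i0 *: F i0 + _]addrC subrK.
    by rewrite !scalerA mulrC.
  - by apply: e_neq; rewrite inE ri orbT.
  by rewrite linearZ /= eigF ?inE ?ri ?orbT // !scalerA mulrC.
rewrite shiftX => /eqP; rewrite scaler_eq0 subr_eq0 => /orP[/eqP lam_e|/eqP //].
by move: (e_neq i0 (mem_head _ _)); rewrite -lam_e eqxx.
Qed.

End EigenSum.

Section Heisenberg.
Variables (K : numFieldType) (d : nat) (V : lmodType K) (Y : vop V) (one w : V).
Variable h : 'I_d -> V.
Hypothesis HV : heisenberg_voa Y one w h.

Let bilY : bilinear_vop Y. Proof. by case: HV. Qed.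
Let voaY : is_voa_on (fun _ => True) Y one w. Proof. by case: HV => _ []. Qed.
Let vaY : is_va_on (fun _ => True) Y one. Proof. by case: voaY. Qed.

Let vop0r := vop0r bilY.   Let vop0l := vop0l bilY.
Let vopDr := vopDr bilY.   Let vopDl := vopDl bilY.
Let vopBl := vopBl bilY.
Let vopZr := vopZr bilY.   Let vopZl := vopZl bilY.
Let vop_sumr := vop_sumr bilY.   Let vop_suml := vop_suml bilY.
Let mode_vacuum := mode_vacuum vaY.   Let mode_vacuumN1 := mode_vacuumN1 vaY.
Let vacuum_mode := vacuum_mode vaY.   Let vacuum_modeN1 := vacuum_modeN1 vaY.

Lemma one_neq0 : one != 0.
Proof. by case: HV => _ [_ []]. Qed.

Lemma h_commutator i j m n v : Y (h i) m (Y (h j) n v) =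
  Y (h j) n (Y (h i) m v) + (if (i == j) && (m + n == 0) then m%:~R else 0) *: v.
Proof. by case: HV => _ [_ [_ [/(_ i j m n v) <- _]]]; rewrite addrC subrK. Qed.

Lemma hmono_span v : exists (N : nat) (ms : 'I_N -> seq ('I_d * nat)) (c : 'I_N -> K),
  v = \sum_(k < N) c k *: hmono Y one h (ms k).
Proof. by case: HV => _ [_ [_ [_ []]]]. Qed.

Lemma two_neq0 : 2%:R != 0 :> K. Proof. by rewrite pnatr_eq0. Qed.

Lemma scale_one_inj (a b : K) : a *: one = b *: one -> a = b.
Proof.
by move/eqP; rewrite -subr_eq0 -scalerBl scaler_eq0 (negbTE one_neq0) orbF subr_eq0 => /eqP.
Qed.

Definition hvec (b : 'rV[K]_d) : V := \sum_(j < d) b 0 j *: h j.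
Definition qvec (i j : 'I_d) : V := Y (h i) (-1) (Y (h j) (-1) one).
Definition quad (C : 'M[K]_d) : V := \sum_(i < d) \sum_(j < d) C i j *: qvec i j.
Definition hder (b : 'rV[K]_d) : V := \sum_(i < d) b 0 i *: Y (h i) (-2) one.

Lemma hvec_is_linear : linear hvec.
Proof.
move=> a b c; rewrite /hvec scaler_sumr -big_split.
by apply: eq_bigr => j _; rewrite !mxE scalerDl scalerA.
Qed.

Lemma quad_is_linear : linear quad.
Proof.
move=> a B C; rewrite /quad scaler_sumr -big_split; apply: eq_bigr => i _.
rewrite scaler_sumr -big_split; apply: eq_bigr => j _.
by rewrite !mxE scalerDl scalerA.
Qed.

Lemma hder_is_linear : linear hder.
Proof.
move=> a b c; rewrite /hder scaler_sumr -big_split.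
by apply: eq_bigr => j _; rewrite !mxE scalerDl scalerA.
Qed.

Let hvec_lin : {linear 'rV[K]_d -> V} :=
  HB.pack hvec (GRing.isLinear.Build K _ V *:%R hvec hvec_is_linear).
Let quad_lin : {linear 'M[K]_d -> V} :=
  HB.pack quad (GRing.isLinear.Build K _ V *:%R quad quad_is_linear).
Let hder_lin : {linear 'rV[K]_d -> V} :=
  HB.pack hder (GRing.isLinear.Build K _ V *:%R hder hder_is_linear).

Lemma hvec0 : hvec 0 = 0. Proof. exact: (linear0 hvec_lin). Qed.
Lemma hvec_sum I (r : seq I) (P : pred I) (F : I -> 'rV[K]_d) :
  hvec (\sum_(i <- r | P i) F i) = \sum_(i <- r | P i) hvec (F i).
Proof. exact: (linear_sum hvec_lin). Qed.
Lemma hvecZ a b : hvec (a *: b) = a *: hvec b. Proof. exact: (linearZZ hvec_lin). Qed.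
Lemma quad0 : quad 0 = 0. Proof. exact: (linear0 quad_lin). Qed.
Lemma quadD B C : quad (B + C) = quad B + quad C. Proof. exact: (linearD quad_lin). Qed.
Lemma quadB B C : quad (B - C) = quad B - quad C. Proof. exact: (linearB quad_lin). Qed.
Lemma quadZ a C : quad (a *: C) = a *: quad C. Proof. exact: (linearZZ quad_lin). Qed.
Lemma hder0 : hder 0 = 0. Proof. exact: (linear0 hder_lin). Qed.
Lemma hderD b c : hder (b + c) = hder b + hder c. Proof. exact: (linearD hder_lin). Qed.
Lemma hderZ a b : hder (a *: b) = a *: hder b. Proof. exact: (linearZZ hder_lin). Qed.

Lemma hvec_mul (u : 'rV[K]_d) (A : 'M[K]_d) : hvec (u *m A) = \sum_k u 0 k *: hvec (row k A).
Proof. by rewrite mulmx_sum_row hvec_sum; apply: eq_bigr => k _; rewrite hvecZ. Qed.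

Lemma hvec_row1 k : hvec (row k 1%:M) = h k.
Proof.
rewrite /hvec (bigD1 k) //= big1 ?addr0 => [|j /negbTE njk]; last first.
  by rewrite !mxE eq_sym njk scale0r.
by rewrite !mxE eqxx scale1r.
Qed.

Lemma mode_hvec_l b n x : Y (hvec b) n x = \sum_k b 0 k *: Y (h k) n x.
Proof. by rewrite /hvec vop_suml; apply: eq_bigr => k _; rewrite vopZl. Qed.

Lemma qvec_sym i j : qvec i j = qvec j i.
Proof. by rewrite /qvec h_commutator andbF scale0r addr0. Qed.

Lemma qvecE i j : qvec i j = Y (h i) (-1) (h j).
Proof. by rewrite /qvec mode_vacuumN1. Qed.

Lemma quad_trmx C : quad C^T = quad C.
Proof.
rewrite /quad exchange_big; apply: eq_bigr => i _; apply: eq_bigr => j _.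
by rewrite mxE qvec_sym.
Qed.

Lemma quad_rows C : quad C = \sum_i Y (h i) (-1) (hvec (row i C)).
Proof.
apply: eq_bigr => i _; rewrite /hvec vop_sumr; apply: eq_bigr => j _.
by rewrite vopZr mxE qvecE.
Qed.

Lemma quad_symmx C : quad C = 2%:R^-1 *: quad (symmx C).
Proof.
by rewrite /symmx quadD quad_trmx -mulr2n -scaler_nat scalerA mulVf ?two_neq0 ?scale1r.
Qed.

Lemma quad_eq_symmx B C : symmx B = symmx C -> quad B = quad C.
Proof. by move=> eqBC; rewrite quad_symmx eqBC -quad_symmx. Qed.

Lemma quad_delta i j : quad (delta_mx i j) = qvec i j.
Proof.
rewrite /quad (bigD1 i) //= [X in _ + X]big1 ?addr0 => [|k /negbTE nki]; last first.
  by rewrite big1 // => l _; rewrite mxE nki /= scale0r.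
rewrite (bigD1 j) //= big1 ?addr0 => [|l /negbTE nlj]; last by rewrite mxE nlj andbF scale0r.
by rewrite mxE !eqxx scale1r.
Qed.

Lemma hder_delta i : hder (delta_mx 0 i) = Y (h i) (-2) one.
Proof.
rewrite /hder (bigD1 i) //= big1 ?addr0 => [|k /negbTE nki].
  by rewrite mxE !eqxx scale1r.
by rewrite mxE nki andbF scale0r.
Qed.

Lemma hmode_h k j (t : int) : 0 <= t ->
  Y (h k) t (h j) = (if (k == j) && (t == 1) then 1 else 0) *: one.
Proof.
move=> t0; rewrite -{1}(mode_vacuumN1 (h j)) h_commutator mode_vacuum // vop0r add0r.
by rewrite subr_eq0; case: (k == j); case: (t =P 1) => // ->.
Qed.

Lemma hmode_hvec k b (t : int) : 0 <= t ->
  Y (h k) t (hvec b) = (if t == 1 then b 0 k else 0) *: one.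
Proof.
move=> t0; rewrite /hvec vop_sumr (bigD1 k) //= big1 ?addr0 => [|j /negbTE njk]; last first.
  by rewrite vopZr hmode_h // eq_sym njk scale0r scaler0.
by rewrite vopZr hmode_h // eqxx scalerA; case: (t == 1); rewrite ?mulr1 ?mulr0.
Qed.

Lemma hvec_mode_h b k (t : int) : 0 <= t ->
  Y (hvec b) t (h k) = (if t == 1 then b 0 k else 0) *: one.
Proof.
move=> t0; rewrite mode_hvec_l (bigD1 k) //= big1 ?addr0 => [|j /negbTE njk]; last first.
  by rewrite hmode_h // njk scale0r scaler0.
by rewrite hmode_h // eqxx scalerA; case: (t == 1); rewrite ?mulr1 ?mulr0.
Qed.

Lemma hmode_quad k (t : int) C : 0 <= t ->
  Y (h k) t (quad C) = if t == 1 then hvec (row k (symmx C)) else 0.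
Proof.
move=> t0; rewrite quad_rows vop_sumr.
under eq_bigr => i _ do rewrite h_commutator hmode_hvec // vopZr mode_vacuumN1 subr_eq0.
case: (t =P 1) => [->|_]; last by rewrite big1 // => i _; rewrite andbF !scale0r addr0.
rewrite big_split /= [X in _ + X](bigD1 k) //= [X in _ + (_ + X)]big1; last first.
  by move=> i /negbTE nik; rewrite eq_sym nik scale0r.
rewrite eqxx /= mulr1z scale1r addr0 /hvec -big_split /=; apply: eq_bigr => j _.
by rewrite !mxE scalerDl addrC.
Qed.

Lemma hvec_mode_quad b (t : int) C : 0 <= t ->
  Y (hvec b) t (quad C) = if t == 1 then hvec (b *m symmx C) else 0.
Proof.
move=> t0; rewrite mode_hvec_l hvec_mul; case: ifP => t1.
  by apply: eq_bigr => k _; rewrite hmode_quad // t1.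
by rewrite big1 // => k _; rewrite hmode_quad // t1 scaler0.
Qed.

Lemma hvec_quad_commutator b (m j : int) x C :
  Y (hvec b) m (Y (quad C) j x) - Y (quad C) j (Y (hvec b) m x) =
  m%:~R *: Y (hvec (b *m symmx C)) (m + j - 1) x.
Proof.
rewrite (commutator_formula bilY vaY _ _ _ (k := 2)); last first.
  by move=> i le2i; rewrite hvec_mode_quad //; case: i le2i => [|[|i]].
rewrite !big_ord_recl big_ord0 /= addr0 !hvec_mode_quad //= vop0l scaler0 add0r.
by rewrite binz1 addr0.
Qed.

Lemma quad_mode_h_comm D (j : int) i (m : int) y :
  Y (quad D) j (Y (h i) m y) =
  Y (h i) m (Y (quad D) j y) - m%:~R *: Y (hvec (row i (symmx D))) (m + j - 1) y.
Proof.
have := hvec_quad_commutator (row i 1%:M) m j y D.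
by rewrite -row_mul mul1mx hvec_row1 => <-; rewrite opprB addrC subrK.
Qed.

Lemma conformal_quad : w = quad (2%:R^-1 *: 1%:M).
Proof.
case: HV => _ [_ [_ [_ [_ ->]]]]; rewrite quadZ; congr (_ *: _).
apply: eq_bigr => i _; rewrite (bigD1 i) //= big1 ?addr0 => [|j /negbTE nji]; last first.
  by rewrite mxE eq_sym nji scale0r.
by rewrite mxE eqxx scale1r.
Qed.

Lemma symmx_half1 : symmx (2%:R^-1 *: 1%:M : 'M[K]_d) = 1%:M.
Proof. by rewrite symmx_halfZ ?trmx1 ?two_neq0. Qed.

Lemma L0_hvec_mode b (m : int) x :
  Y w 1 (Y (hvec b) m x) = Y (hvec b) m (Y w 1 x) - m%:~R *: Y (hvec b) m x.
Proof.
have := hvec_quad_commutator b m 1 x (2%:R^-1 *: 1%:M).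
by rewrite -conformal_quad symmx_half1 mulmx1 addrK => <-; rewrite opprB addrC subrK.
Qed.

Definition mono_weight (s : seq ('I_d * nat)) : nat := sumn [seq p.2.+1 | p <- s].

Lemma L0_hmono s : Y w 1 (hmono Y one h s) = (mono_weight s)%:R *: hmono Y one h s.
Proof.
elim: s => [|[i n] s IHs] /=; first by rewrite mode_vacuum // scale0r.
rewrite -{1 2}(hvec_row1 i) L0_hvec_mode IHs vopZr hvec_row1 /mono_weight /=.
by rewrite -scalerBl mulrNz opprK natrD addrC.
Qed.

Definition weight2_form (v : V) : Prop := exists B b, v = quad B + hder b.

Lemma weight2_form0 : weight2_form 0.
Proof. by exists 0, 0; rewrite quad0 hder0 addr0. Qed.

Lemma weight2_formD u v : weight2_form u -> weight2_form v -> weight2_form (u + v).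
Proof.
by move=> [B [b ->]] [C [c ->]]; exists (B + C), (b + c); rewrite quadD hderD addrACA.
Qed.

Lemma weight2_formZ a v : weight2_form v -> weight2_form (a *: v).
Proof. by move=> [B [b ->]]; exists (a *: B), (a *: b); rewrite quadZ hderZ scalerDr. Qed.

Lemma weight2_hmono s : mono_weight s = 2%N -> weight2_form (hmono Y one h s).
Proof.
case: s => [|[i [|[|n]]] s] //=; rewrite /mono_weight /=.
- case: s => [|[j [|m]] [|p s]] //= _.
  by exists (delta_mx i j), 0; rewrite hder0 addr0 quad_delta.
- by case: s => //= _; exists 0, (delta_mx 0 i); rewrite quad0 add0r hder_delta.
Qed.

Lemma weight2_vectors v : Y w 1 v = 2%:R *: v -> weight2_form v.
Proof.
move=> L0v; have [N [ms [c defv]]] := hmono_span v.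
rewrite (bigID (fun k => mono_weight (ms k) == 2%N)) /= in defv.
set P2 := \sum_(k < N | _) _ in defv; set Pn := \sum_(k < N | _) _ in defv.
have wP2 : weight2_form P2.
  by apply: (big_ind _ weight2_form0 weight2_formD) => k /eqP/weight2_hmono/weight2_formZ.
suff Pn0 : Pn = 0 by rewrite defv Pn0 addr0.
have L0P2 : Y w 1 P2 = 2%:R *: P2.
  rewrite /P2 vop_sumr scaler_sumr; apply: eq_bigr => k /eqP wk.
  by rewrite vopZr L0_hmono wk scalerA mulrC -scalerA.
have L0Pn : Y w 1 Pn = 2%:R *: Pn.
  by move: L0v; rewrite defv vopDr L0P2 scalerDr => /addrI.
rewrite /Pn -big_filter; apply: (eigen_sum_eq0 (f := vop_rlin bilY w 1) (lam := 2%:R)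
  (e := fun k => (mono_weight (ms k))%:R)) => [k _|k|] /=.
- by rewrite vopZr L0_hmono scalerA mulrC -scalerA.
- by rewrite mem_filter => /andP[nk2 _]; rewrite eqr_nat.
- by rewrite big_filter.
Qed.

Lemma hmode1_hder k b : Y (h k) 1 (hder b) = 0.
Proof.
rewrite /hder vop_sumr big1 // => i _.
by rewrite vopZr h_commutator mode_vacuum // vop0r add0r andbF scale0r scaler0.
Qed.

Lemma h1h1_quad_hder k l C b :
  Y (h l) 1 (Y (h k) 1 (quad C + hder b)) = symmx C k l *: one.
Proof. by rewrite vopDr hmode1_hder addr0 hmode_quad // eqxx hmode_hvec // eqxx mxE. Qed.

Lemma symmx_eq_quad_hder B C b c : quad B + hder b = quad C + hder c -> symmx B = symmx C.
Proof.
move=> eqBC; apply/matrixP => k l; apply: scale_one_inj.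
by rewrite -(h1h1_quad_hder _ _ _ b) -(h1h1_quad_hder _ _ _ c) eqBC.
Qed.

Lemma symmx_eq_quad B C : quad B = quad C -> symmx B = symmx C.
Proof. by move=> eqBC; apply: (symmx_eq_quad_hder (b := 0) (c := 0)); rewrite eqBC. Qed.

Lemma hvec_inj b : hvec b = 0 -> b = 0.
Proof.
move=> b0; apply/rowP => k; rewrite mxE; apply: scale_one_inj.
by rewrite -(hmode_hvec k b (t := 1)) //= b0 vop0r scale0r.
Qed.

Lemma quad_mode1_h D k : Y (quad D) 1 (h k) = hvec (row k (symmx D)).
Proof.
rewrite -{1}(mode_vacuumN1 (h k)) quad_mode_h_comm mode_vacuum // vop0r sub0r.
by rewrite (_ : -1 + 1 - 1 = -1 :> int) // mode_vacuumN1 mulrNz scaleNr opprK scale1r.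
Qed.

Lemma quad_mode1_hvec D b : Y (quad D) 1 (hvec b) = hvec (b *m symmx D).
Proof.
by rewrite {1}/hvec vop_sumr hvec_mul; apply: eq_bigr => k _; rewrite vopZr quad_mode1_h.
Qed.

Lemma quad_mode_h D (j : int) k : 2 <= j -> Y (quad D) j (h k) = 0.
Proof.
move=> le2j; rewrite -{1}(mode_vacuumN1 (h k)) quad_mode_h_comm mode_vacuum ?(le_trans _ le2j) //.
by rewrite vop0r sub0r mode_vacuum ?scaler0 ?oppr0 //; lia.
Qed.

Lemma quad_mode_qvec D (j : int) i k : 2 <= j ->
  Y (quad D) j (qvec i k) = (if j == 3 then symmx D i k else 0) *: one.
Proof.
move=> le2j; rewrite qvecE quad_mode_h_comm quad_mode_h // vop0r sub0r mulrNz scaleNr opprK.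
have -> : -1 + j - 1 = j - 2 by lia.
rewrite scale1r hvec_mode_h; last by rewrite subr_ge0.
by rewrite mxE (_ : (j - 2 == 1) = (j == 3)) //; apply/eqP/eqP; lia.
Qed.

Lemma quad_mode_quad D (j : int) C : 2 <= j ->
  Y (quad D) j (quad C) = (if j == 3 then \sum_i \sum_k C i k * symmx D i k else 0) *: one.
Proof.
move=> le2j; rewrite {1}/quad vop_sumr; case: ifP => j3; last first.
  rewrite scale0r big1 // => i _; rewrite vop_sumr big1 // => k _.
  by rewrite vopZr quad_mode_qvec // j3 scale0r scaler0.
rewrite scaler_suml; apply: eq_bigr => i _; rewrite vop_sumr scaler_suml.
by apply: eq_bigr => k _; rewrite vopZr quad_mode_qvec // j3 scalerA.
Qed.

Lemma quad_mode2_hder D b : Y (quad D) 2 (hder b) = 2%:R *: hvec (b *m symmx D).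
Proof.
rewrite /hder vop_sumr hvec_mul scaler_sumr; apply: eq_bigr => i _.
rewrite vopZr quad_mode_h_comm mode_vacuum // vop0r sub0r.
rewrite (_ : -2 + 2 - 1 = -1 :> int) // mode_vacuumN1 scalerA mulrC -scalerA.
by congr (_ *: _); rewrite -scaleNr -mulrNz.
Qed.

Lemma sum_hvec_mode (A C : 'M[K]_d) :
  \sum_i Y (hvec (row i A)) (-1) (hvec (row i C)) = quad (A^T *m C).
Proof.
have E a c : Y (hvec a) (-1) (hvec c) = \sum_k \sum_l (a 0 k * c 0 l) *: qvec k l.
  rewrite mode_hvec_l; apply: eq_bigr => k _.
  rewrite {1}/hvec vop_sumr scaler_sumr; apply: eq_bigr => l _.
  by rewrite vopZr !scalerA qvecE mulrC.
rewrite (eq_bigr _ (fun i _ => E _ _)) /quad exchange_big /=.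
apply: eq_bigr => k _; rewrite exchange_big /=; apply: eq_bigr => l _.
by rewrite !mxE scaler_suml; apply: eq_bigr => i _; rewrite !mxE.
Qed.

Lemma quad_mode1_quad B C : Y (quad B) 1 (quad C) = quad (C *m symmx B) + quad (symmx B *m C).
Proof.
rewrite (quad_rows C) (quad_rows (C *m _)) vop_sumr -{2}(trmx_symmx B) -sum_hvec_mode.
rewrite -big_split /=; apply: eq_bigr => i _; rewrite quad_mode_h_comm quad_mode1_hvec row_mul.
by rewrite (_ : -1 + 1 - 1 = -1 :> int) // mulrNz scaleNr opprK scale1r.
Qed.

Lemma semi_conformal_quad w' : semi_conformal Y one w w' ->
  exists B, w' = quad B /\ symmx B *m symmx B = symmx B.
Proof.
case=> U [voaU agree]; have w'2 := conformal_mode2_self bilY voaU.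
have [Uw' w'1] : U w' /\ Y w' 1 w' = 2%:R *: w' by case: voaU => _ [? [_ []]].
have [B [b defw']] : weight2_form w' by apply: weight2_vectors; rewrite agree.
have b0 : b = 0.
  have : Y w 2 w' = 0 by rewrite agree.
  rewrite defw' vopDr conformal_quad quad_mode_quad //.
  rewrite quad_mode2_hder symmx_half1 mulmx1 /= scale0r add0r => /eqP.
  by rewrite scaler_eq0 (negbTE two_neq0) => /eqP/hvec_inj.
rewrite b0 hder0 addr0 in defw'; exists B; split => //.
move: w'1; rewrite defw' quad_mode1_quad -quadD -quadZ => /symmx_eq_quad.
by rewrite symmx_mul_symmx /symmx linearZ /= -scalerDr => /(scalerI two_neq0).
Qed.

Lemma weight2_vec_quad a b : weight2_vec Y one h a b = quad (upper_part a) + hder b.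
Proof.
congr (_ + _); apply: eq_bigr => i _; rewrite big_mkcond /=; apply: eq_bigr => j _.
by rewrite mxE; case: ifP; rewrite ?scale0r.
Qed.

Lemma conformal_derivative u (n : int) x : Y (Y w 0 u) n x = (- n)%:~R *: Y u (n - 1) x.
Proof. by case: voaY => _ [_ [_ [_ [/(_ u I n x I)]]]]. Qed.

Inductive subalg_gen (P : 'M[K]_d) : V -> Prop :=
  | subalg_one : subalg_gen P one
  | subalg_lin a u v : subalg_gen P u -> subalg_gen P v -> subalg_gen P (a *: u + v)
  | subalg_mode (b : 'rV[K]_d) (n : int) u :
      (b <= P)%MS -> subalg_gen P u -> subalg_gen P (Y (hvec b) n u).

Section GeneratedSubalgebra.
Variable P : 'M[K]_d.
Local Notation U := (subalg_gen P).

Lemma subalg0 : U 0.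
Proof. by have := subalg_lin (-1) (subalg_one P) (subalg_one P); rewrite scaleN1r addNr. Qed.

Lemma subalgZ a u : U u -> U (a *: u).
Proof. by move=> Uu; have := subalg_lin a Uu subalg0; rewrite addr0. Qed.

Lemma subalgD u v : U u -> U v -> U (u + v).
Proof. by move=> Uu Uv; have := subalg_lin 1 Uu Uv; rewrite scale1r. Qed.

Lemma subalgB u v : U u -> U v -> U (u - v).
Proof. by move=> Uu Uv; rewrite addrC -scaleN1r; apply: subalg_lin. Qed.

Lemma subalg_sum I (r : seq I) (F : I -> V) : (forall i, U (F i)) -> U (\sum_(i <- r) F i).
Proof. by move=> UF; apply: (big_ind U subalg0 subalgD). Qed.

(* By the associativity formula, a mode of h(b)_m u is a combination of
   products of modes of h(b) and of u. *)
Lemma subalg_mode_closed u v n : U u -> U v -> U (Y u n v).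
Proof.
move=> Uu; elim: Uu n v => {u} [|a u1 u2 _ IH1 _ IH2|b m u1 bP _ IH] n v Uv.
- have [->|/eqP n_neqN1] := n =P -1; first by rewrite vacuum_modeN1.
  by rewrite vacuum_mode //; exact: subalg0.
- by rewrite vopDl vopZl; apply: subalg_lin; [apply: IH1 | apply: IH2].
- have [N ->] := associator_formula vaY (hvec b) u1 v n m.
  apply: subalg_sum => i; apply/subalgZ/subalgB; first exact/subalg_mode/IH.
  by apply/subalgZ/IH/subalg_mode.
Qed.

Hypotheses (symP : P^T = P) (idemP : P *m P = P).

Definition proj_conformal : V := quad (2%:R^-1 *: P).

Lemma symmx_proj : symmx (2%:R^-1 *: P) = P.
Proof. by rewrite symmx_halfZ ?two_neq0. Qed.

Lemma symmx_proj_compl : symmx (2%:R^-1 *: (1%:M - P)) = 1%:M - P.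
Proof. by rewrite symmx_halfZ ?two_neq0 // linearB /= trmx1 symP. Qed.

Lemma conformal_sub_proj : w - proj_conformal = quad (2%:R^-1 *: (1%:M - P)).
Proof. by rewrite conformal_quad /proj_conformal -quadB scalerBr. Qed.

(* w - proj_conformal is the conformal vector of h(1 - P), which commutes with h(P). *)
Lemma proj_compl_mode_eq0 u : U u -> forall n : int, 0 <= n ->
  Y (quad (2%:R^-1 *: (1%:M - P))) n u = 0.
Proof.
elim=> {u} [|a u1 u2 _ IH1 _ IH2|b m u1 bP _ IH] n n0.
- exact: mode_vacuum.
- by rewrite vopDr vopZr IH1 // IH2 // scaler0 addr0.
- have := hvec_quad_commutator b m n u1 (2%:R^-1 *: (1%:M - P)).
  rewrite symmx_proj_compl mulmxBr mulmx1 (idem_mulmx_sub idemP bP) subrr hvec0 vop0l scaler0.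
  by rewrite IH // vop0r sub0r => /eqP; rewrite oppr_eq0 => /eqP.
Qed.

Lemma proj_conformal_agree u (n : int) : U u -> 0 <= n -> Y w n u = Y proj_conformal n u.
Proof.
by move=> Uu n0; apply/eqP; rewrite -subr_eq0 -vopBl conformal_sub_proj proj_compl_mode_eq0.
Qed.

Lemma subalg_proj_conformal : U proj_conformal.
Proof.
rewrite /proj_conformal quadZ -[X in quad X]idemP -[X in quad (X *m _)]symP -sum_hvec_mode.
apply/subalgZ/subalg_sum => i.
apply: subalg_mode; first exact: row_sub.
rewrite -(mode_vacuumN1 (hvec (row i P))).
by apply: subalg_mode; [exact: row_sub | exact: subalg_one].
Qed.

Lemma proj_conformal_L0 : Y proj_conformal 1 proj_conformal = 2%:R *: proj_conformal.
Proof.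
rewrite /proj_conformal quad_mode1_quad symmx_proj -scalemxAl -scalemxAr idemP.
by rewrite scaler_nat mulr2n.
Qed.

Local Notation wP := proj_conformal.

Definition proj_charge : K := \sum_i \sum_k (2%:R^-1 *: P) i k * P i k.

Lemma proj_conformal_mode_self (j : int) : 2 <= j ->
  Y wP j wP = (if j == 3 then proj_charge else 0) *: one.
Proof. by move=> le2j; rewrite [in Y wP j]/proj_conformal quad_mode_quad // symmx_proj. Qed.

Lemma proj_conformal_virasoro (m n : int) v : U v ->
  Y wP (m + 1) (Y wP (n + 1) v) - Y wP (n + 1) (Y wP (m + 1) v) =
  (m - n)%:~R *: Y wP (m + n + 1) v
  + (if m + n == 0 then ((m ^+ 3 - m)%:~R / 12%:R) * (2%:R * proj_charge) else 0) *: v.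
Proof.
move=> Uv; rewrite (commutator_formula bilY vaY _ _ _ (k := 4)); last first.
  move=> i le4i; rewrite proj_conformal_mode_self; last by lia.
  by rewrite ifN ?scale0r ?vop0l //; apply/eqP; lia.
rewrite !big_ord_recl big_ord0 addr0 /=.
rewrite -(proj_conformal_agree (n := 0) subalg_proj_conformal) //.
rewrite conformal_derivative proj_conformal_L0 // !proj_conformal_mode_self //=.
rewrite scale0r vop0l scaler0 addr0 !vopZl binz0 binz1 scale1r.
have -> : m + 1 + (n + 1) - 1 = m + n + 1 by lia.
have -> : m + 1 + (n + 1) - 3 = m + n - 1 by lia.
rewrite !scalerA add0r addrA -scalerDl.
have -> : (- (m + 1 + (n + 1)))%:~R + (m + 1)%:~R * 2%:R = (m - n)%:~R :> K.
  by rewrite [2%:R]pmulrn -intrM -intrD; congr (_%:~R); lia.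
congr (_ + _); case: ifP => [/eqP mn0|mn0]; last first.
  by rewrite scale0r vacuum_mode ?scaler0 //; apply/eqP => mnN1; move/negbT/eqP: mn0; lia.
have -> : m + n - 1 = -1 by lia.
rewrite vacuum_modeN1; congr (_ *: _).
rewrite /binz !big_ord_recl big_ord0 /= mulr1.
rewrite (_ : bump 0 (bump 0 0) = 2%N) // (_ : bump 0 0 = 1%N) // (_ : 3`! = 6%N) //.
rewrite !intrB !intrD !exprS expr0 !intrM mulr1.
by field.
Qed.

Lemma subalg_graded u : U u -> exists s : seq (V * int), u = \sum_(p <- s) p.1 /\
  (forall p, p \in s -> U p.1 /\ Y w 1 p.1 = p.2%:~R *: p.1).
Proof.
elim=> {u} [|a u1 u2 _ [s1 [-> s1P]] _ [s2 [-> s2P]]|b m u1 bP _ [s1 [-> s1P]]].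
- exists [:: (one, 0)]; split; first by rewrite big_seq1.
  move=> p; rewrite inE => /eqP -> /=; split; first exact: subalg_one.
  by rewrite mode_vacuum // scale0r.
- exists ([seq (a *: p.1, p.2) | p <- s1] ++ s2); split.
    by rewrite big_cat big_map /= scaler_sumr.
  move=> p; rewrite mem_cat => /orP[/mapP[p' /s1P[Up' L0p'] ->]|/s2P //] /=.
  by split; [exact: subalgZ | rewrite vopZr L0p' !scalerA mulrC].
- exists [seq (Y (hvec b) m p.1, p.2 - m) | p <- s1]; split.
    by rewrite big_map vop_sumr.
  move=> p /mapP[p' /s1P[Up' L0p'] ->] /=; split; first exact: subalg_mode.
  by rewrite L0_hvec_mode L0p' vopZr intrB scalerBl.
Qed.

Lemma semi_conformal_proj : semi_conformal Y one w wP.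
Proof.
have agree := proj_conformal_agree.
exists U; split; last by move=> n n0 u Uu; apply: agree.
have [_ [_ [_ [_ [_ [_ [fin_wt [N wt_low]]]]]]]] := voaY.
split; [|split; [|split; [|split; [|split; [|split; [|split]]]]]].
- apply: (is_va_on_subspace vaY); [split | exact: subalg_one | exact: subalg_mode_closed].
    exact: subalg0.
  by move=> a u v Uu Uv; apply: subalg_lin.
- exact: subalg_proj_conformal.
- by exists (2%:R * proj_charge) => m n v; apply: proj_conformal_virasoro.
- exact: proj_conformal_L0.
- by move=> u Uu n x Ux; rewrite -(agree u 0 Uu) // conformal_derivative.
- move=> v /subalg_graded[s [-> sP]].
  exists (size s), (fun i => (nth (0, 0) s i).1), (fun i => (nth (0, 0) s i).2); split.
    by rewrite (big_nth (0, 0)) big_mkord.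
  move=> i; have [Up L0p] := sP _ (mem_nth (0, 0) (ltn_ord i)).
  by split => //; rewrite -agree.
- move=> n; have [s sP] := fin_wt n; exists s => v Uv L0v.
  by apply: sP => //; rewrite agree.
- by exists N => n v ltnN Uv L0v; apply: (wt_low n v ltnN) => //; rewrite agree.
Qed.

End GeneratedSubalgebra.

Lemma imA_rel_symmx w' W B b : w' = quad B + hder b -> imA_rel Y one h w' W ->
  (W == symmx B)%MS.
Proof.
move=> defw' [a [b' [defw'a eqW]]]; move: defw'a; rewrite defw' weight2_vec_quad.
by move/symmx_eq_quad_hder ->; rewrite -trmx_symmx -Amat_symmx.
Qed.

Lemma imA_rel_regular w' : semi_conformal Y one w w' ->
  exists W : 'M[K]_d, imA_rel Y one h w' W /\ regular_sub W.
Proof.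
move=> /semi_conformal_quad[B [-> idemS]]; have [a eqSa] := symmx_upper_part B.
exists (symmx B); split; last exact: sym_idem_regular (trmx_symmx B) idemS.
exists a, 0; rewrite weight2_vec_quad hder0 addr0 Amat_symmx eqSa trmx_symmx submx_refl.
by split => //; apply: quad_eq_symmx.
Qed.

Lemma imA_rel_eqmx w' W1 W2 : imA_rel Y one h w' W1 -> imA_rel Y one h w' W2 ->
  (W1 == W2)%MS.
Proof.
move=> imA1 imA2; have [a [b [defw' _]]] := imA1; rewrite weight2_vec_quad in defw'.
move: imA1 imA2 => /(imA_rel_symmx defw')/eqmxP eqW1 /(imA_rel_symmx defw')/eqmxP eqW2.
exact/eqmxP/(eqmx_trans eqW1 (eqmx_sym eqW2)).
Qed.

Lemma imA_rel_inj w1 w2 W : semi_conformal Y one w w1 -> semi_conformal Y one w w2 ->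
  imA_rel Y one h w1 W -> imA_rel Y one h w2 W -> w1 = w2.
Proof.
move=> /semi_conformal_quad[B1 [-> idem1]] /semi_conformal_quad[B2 [-> idem2]].
have quad_hder0 B : quad B = quad B + hder 0 by rewrite hder0 addr0.
move=> /(imA_rel_symmx (quad_hder0 B1))/eqmxP eqW1.
move=> /(imA_rel_symmx (quad_hder0 B2))/eqmxP eqW2.
apply: quad_eq_symmx; apply: sym_idem_eq (trmx_symmx _) (trmx_symmx _) idem1 idem2 _.
exact/eqmxP/(eqmx_trans (eqmx_sym eqW1) eqW2).
Qed.

Lemma imA_rel_surj W : regular_sub W ->
  exists w', semi_conformal Y one w w' /\ imA_rel Y one h w' W.
Proof.
move=> /regular_proj[P [symP idemP eqPW]]; have [a eqSa] := symmx_upper_part (2%:R^-1 *: P).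
exists (proj_conformal P); split; first exact: semi_conformal_proj.
exists a, 0; rewrite weight2_vec_quad hder0 addr0 Amat_symmx eqSa symmx_proj // symP.
by split; [apply: quad_eq_symmx; rewrite eqSa | apply/eqmxP/eqmx_sym/eqmxP].
Qed.

End Heisenberg.

Theorem corollary3p3 (d : nat) (V : lmodType CC) (Y : V -> int -> V -> V)
    (one w : V) (h : 'I_d -> V) :
  heisenberg_voa Y one w h ->
  [/\ (* the map is defined on Sc and lands in Reg(h) *)
      (forall w', semi_conformal Y one w w' ->
         exists W : 'M[CC]_d, imA_rel Y one h w' W /\ regular_sub W),
      (* it is well defined *)
      (forall w' (W1 W2 : 'M[CC]_d), semi_conformal Y one w w' ->
         imA_rel Y one h w' W1 -> imA_rel Y one h w' W2 -> (W1 == W2)%MS),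
      (* injective *)
      (forall w1 w2 (W : 'M[CC]_d), semi_conformal Y one w w1 ->
         semi_conformal Y one w w2 ->
         imA_rel Y one h w1 W -> imA_rel Y one h w2 W -> w1 = w2) &
      (* onto Reg(h) *)
      (forall W : 'M[CC]_d, regular_sub W ->
         exists w', semi_conformal Y one w w' /\ imA_rel Y one h w' W)].
Proof.
move=> HV; split.
- exact: imA_rel_regular HV.
- by move=> w' W1 W2 _; exact: (imA_rel_eqmx HV).
- exact: imA_rel_inj HV.
- exact: imA_rel_surj HV.
Qed.
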